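(* Let $\mathcal{A}$ be a finite-dimensional $C^*$-algebra with a faithful trace $\tau$, and let $\{a_j\}_{j=1}^m$ be an orthonormal basis of $\mathcal{A}$ with respect to $\tau$. Then \[ \sum_{j=1}^m Ja_jJ\otimes a_j\geq 0 \] in $\mathcal{A}'\otimes\mathcal{A}$.
   Context: $L^2(\mathcal{A},\tau)$ is the GNS Hilbert space of $\tau$ with cyclic vacuum vector $\Omega$ and inner product $\langle a\Omega,b\Omega\rangle=\tau(b^*a)$; $\mathcal{A}$ acts on it by left multiplication, and $\mathcal{A}'$ is the commutant. $J$ is the modular conjugation, the antiunitary $J(a\Omega)=a^*\Omega$, so that $J\mathcal{A}J=\mathcal{A}'$. Orthonormality is with respect to $\langle a,b\rangle=\tau(b^*a)$. *)

From HB Require Import structures.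
From mathcomp Require Import all_boot all_order all_algebra.
Set Implicit Arguments. Unset Strict Implicit. Unset Printing Implicit Defensive.
Import Order.TTheory GRing.Theory Num.Theory.
Local Open Scope ring_scope.

Section Defs.
Variables (C : numClosedFieldType) (n : nat).
Local Notation M := 'M[C]_n.

Definition adj (x : M) : M := map_mx (fun z => z^*) x^T.

(** A : a *-subalgebra of M_n(C), i.e. (concretely) a finite-dimensional
    C*-algebra. *)
Definition star_subalgebra (A : {pred M}) : Prop :=
  [/\ (0 : M) \in A,
      forall (c : C) x y, x \in A -> y \in A -> c *: x + y \in A,
      forall x y, x \in A -> y \in A -> x *m y \in A &
      forall x, x \in A -> adj x \in A].

Definition faithful_trace (A : {pred M}) (tau : M -> C) : Prop :=
  [/\ forall (c : C) x y, x \in A -> y \in A -> tau (c *: x + y) = c * tau x + tau y,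
      forall x y, x \in A -> y \in A -> tau (x *m y) = tau (y *m x),
      forall x, x \in A -> 0 <= tau (adj x *m x) &
      forall x, x \in A -> tau (adj x *m x) = 0 -> x = 0].

(** GNS inner product on L^2(A,tau) = A : <x, y> = tau (y^* x). *)
Definition ip (tau : M -> C) (x y : M) : C := tau (adj y *m x).

Definition orthonormal_basis (A : {pred M}) (tau : M -> C) (m : nat)
    (a : 'I_m -> M) : Prop :=
  [/\ forall j, a j \in A,
      forall j k, ip tau (a j) (a k) = (j == k)%:R &
      forall x, x \in A -> exists c : 'I_m -> C, x = \sum_(j < m) c j *: a j].

Definition Lmul (a : M) : M -> M := fun b => a *m b.
Definition Jmod (b : M) : M := adj b.
Definition JaJ (a : M) : M -> M := fun b => Jmod (Lmul a (Jmod b)).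

(** The operator \sum_j S_j (x) T_j on L^2(A,tau) (x) L^2(A,tau) is positive:
    <X xi, xi> >= 0 for every xi = \sum_k x_k (x) y_k with x_k, y_k in A
    (such vectors exhaust the Hilbert tensor product), where the inner product
    on the tensor product is <x (x) y, x' (x) y'> = <x,x'><y,y'>. *)
Definition tensor_op_pos (A : {pred M}) (tau : M -> C) (m : nat)
    (S T : 'I_m -> M -> M) : Prop :=
  forall (N : nat) (x y : 'I_N -> M),
    (forall k, x k \in A) -> (forall k, y k \in A) ->
    0 <= \sum_(k < N) \sum_(l < N) \sum_(j < m)
           ip tau (S j (x k)) (x l) * ip tau (T j (y k)) (y l).

End Defs.

(** The (k,l) matrix coefficient of [X = \sum_j J a_j J (x) a_j] between
    [x_k (x) y_k] and [x_l (x) y_l] is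
    [\sum_j tau (adj a_j * adj x_l * x_k) * tau (a_j * y_k * adj y_l)]; by
    traciality and the expansion [b = \sum_j <b, a_j> a_j] in the orthonormal
    basis it collapses to [<x_k y_k, x_l y_l>].  Hence [<X xi, xi>] is the
    squared norm [<w, w>] of [w = \sum_k x_k y_k], which is nonnegative. *)
From HB Require Import structures.
From mathcomp Require Import all_boot all_order all_algebra.
Import Order.TTheory GRing.Theory Num.Theory.
Local Open Scope ring_scope.
Set Implicit Arguments.

Section Adjoint.
Variables (C : numClosedFieldType) (n : nat).
Local Notation M := 'M[C]_n.

Lemma adjM (x y : M) : adj (x *m y) = adj y *m adj x.
Proof. by rewrite /adj trmx_mul map_mxM. Qed.

Lemma adjK : involutive (@adj C n).
Proof. exact: trmxCK. Qed.

Lemma adj_sum (I : Type) (r : seq I) (F : I -> M) :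
  adj (\sum_(i <- r) F i) = \sum_(i <- r) adj (F i).
Proof.
apply/matrixP=> i j; rewrite /adj !mxE !summxE rmorph_sum.
by apply: eq_bigr => k _; rewrite !mxE.
Qed.

End Adjoint.

Section TracialStarAlgebra.
Variables (C : numClosedFieldType) (n : nat).
Local Notation M := 'M[C]_n.
Variables (A : {pred M}) (tau : M -> C).
Hypotheses (HA : star_subalgebra A) (Htau : faithful_trace A tau).

Lemma subalg0 : (0 : M) \in A. Proof. by case: HA. Qed.

Lemma subalgZD c x y : x \in A -> y \in A -> c *: x + y \in A.
Proof. by case: HA => _ + _ _; apply. Qed.

Lemma subalgM x y : x \in A -> y \in A -> x *m y \in A.
Proof. by case: HA => _ _ + _; apply. Qed.

Lemma subalg_adj x : x \in A -> adj x \in A.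
Proof. by case: HA => _ _ _; apply. Qed.

Lemma subalg_lincomb (I : Type) (r : seq I) (c : I -> C) (F : I -> M) :
  (forall i, F i \in A) -> \sum_(i <- r) c i *: F i \in A.
Proof.
move=> AF; elim: r => [|i r IHr]; first by rewrite big_nil subalg0.
by rewrite big_cons subalgZD.
Qed.

Lemma subalg_sum (I : Type) (r : seq I) (F : I -> M) :
  (forall i, F i \in A) -> \sum_(i <- r) F i \in A.
Proof.
move=> AF; rewrite (eq_bigr (fun i => 1 *: F i)) => [|i _]; last by rewrite scale1r.
exact: subalg_lincomb.
Qed.

Lemma traceZD c x y : x \in A -> y \in A -> tau (c *: x + y) = c * tau x + tau y.
Proof. by case: Htau => + _ _ _; apply. Qed.

Lemma traceC x y : x \in A -> y \in A -> tau (x *m y) = tau (y *m x).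
Proof. by case: Htau => _ + _ _; apply. Qed.

Lemma trace_norm_ge0 x : x \in A -> 0 <= tau (adj x *m x).
Proof. by case: Htau => _ _ + _; apply. Qed.

Lemma trace0 : tau 0 = 0.
Proof.
have := traceZD 1 subalg0 subalg0.
by rewrite scale1r addr0 mul1r => /esym/eqP; rewrite addrC -subr_eq0 addrK => /eqP.
Qed.

Lemma trace_lincomb (I : Type) (r : seq I) (c : I -> C) (F : I -> M) :
  (forall i, F i \in A) -> tau (\sum_(i <- r) c i *: F i) = \sum_(i <- r) c i * tau (F i).
Proof.
move=> AF; elim: r => [|i r IHr]; first by rewrite !big_nil trace0.
by rewrite !big_cons traceZD ?subalg_lincomb // IHr.
Qed.

Lemma trace_sum (I : Type) (r : seq I) (F : I -> M) :
  (forall i, F i \in A) -> tau (\sum_(i <- r) F i) = \sum_(i <- r) tau (F i).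
Proof.
move=> AF; rewrite (eq_bigr (fun i => 1 *: F i)) => [|i _]; last by rewrite scale1r.
by rewrite trace_lincomb //; apply: eq_bigr => i _; rewrite mul1r.
Qed.

Lemma ip_sum_sum (N : nat) (w : 'I_N -> M) : (forall k, w k \in A) ->
  \sum_(k < N) \sum_(l < N) ip tau (w k) (w l)
    = ip tau (\sum_(k < N) w k) (\sum_(k < N) w k).
Proof.
move=> Aw; have AwM k l : adj (w l) *m w k \in A by rewrite subalgM ?subalg_adj.
rewrite /ip adj_sum mulmx_suml trace_sum => [|l]; last first.
  by rewrite mulmx_sumr subalg_sum.
rewrite exchange_big; apply: eq_bigr => l _.
by rewrite mulmx_sumr trace_sum.
Qed.

Section OrthonormalBasis.
Variables (m : nat) (a : 'I_m -> M).
Hypothesis Ha : orthonormal_basis A tau a.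

Lemma onb_mem j : a j \in A. Proof. by case: Ha. Qed.

Lemma onb_expansion b : b \in A -> b = \sum_(j < m) ip tau b (a j) *: a j.
Proof.
case: Ha => _ ip_a span_a /span_a [c ->]; apply: eq_bigr => k _; congr (_ *: _).
rewrite /ip mulmx_sumr (eq_bigr (fun j => c j *: (adj (a k) *m a j))) => [|j _];
  last by rewrite scalemxAr.
rewrite trace_lincomb => [|j]; last by rewrite subalgM ?subalg_adj ?onb_mem.
rewrite (bigD1 k) //= big1 => [|j /negPf neq_jk]; last first.
  by have := ip_a j k; rewrite /ip neq_jk => ->; rewrite mulr0.
by have := ip_a k k; rewrite /ip eqxx => ->; rewrite mulr1 addr0.
Qed.

Lemma trace_mul_onb_expansion b c : b \in A -> c \in A ->
  \sum_(j < m) ip tau b (a j) * tau (a j *m c) = tau (b *m c).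
Proof.
move=> Ab Ac; rewrite {2}(onb_expansion Ab) mulmx_suml.
rewrite (eq_bigr (fun j => ip tau b (a j) *: (a j *m c))) => [|j _];
  last by rewrite scalemxAl.
by rewrite trace_lincomb // => j; rewrite subalgM ?onb_mem.
Qed.

End OrthonormalBasis.

Lemma ip_JaJ b x x' : b \in A -> x \in A -> x' \in A ->
  ip tau (JaJ b x) x' = ip tau (adj x' *m x) b.
Proof.
move=> Ab Ax Ax'; rewrite /ip /JaJ /Jmod /Lmul adjM adjK mulmxA traceC //.
  by rewrite subalgM ?subalg_adj.
by rewrite subalg_adj.
Qed.

Lemma ip_Lmul b y y' : b \in A -> y \in A -> y' \in A ->
  ip tau (Lmul b y) y' = tau (b *m (y *m adj y')).
Proof.
move=> Ab Ay Ay'; rewrite /ip /Lmul traceC ?subalgM ?subalg_adj //.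
by rewrite mulmxA.
Qed.

Lemma ip_sum_JaJ_Lmul m (a : 'I_m -> M) x x' y y' :
  orthonormal_basis A tau a -> x \in A -> x' \in A -> y \in A -> y' \in A ->
  \sum_(j < m) ip tau (JaJ (a j) x) x' * ip tau (Lmul (a j) y) y'
    = ip tau (x *m y) (x' *m y').
Proof.
move=> Ha Ax Ax' Ay Ay'; have Aa := onb_mem Ha.
rewrite (eq_bigr (fun j => ip tau (adj x' *m x) (a j) * tau (a j *m (y *m adj y'))));
  last by move=> j _; rewrite ip_JaJ ?ip_Lmul ?subalgM ?subalg_adj.
rewrite trace_mul_onb_expansion ?subalgM ?subalg_adj //.
rewrite /ip adjM -[adj y' *m _ *m _]mulmxA (@traceC (adj y')) ?subalgM ?subalg_adj //.
by rewrite !mulmxA.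
Qed.

End TracialStarAlgebra.

Theorem mainTheorem12 (C : numClosedFieldType) (n : nat) (A : {pred 'M[C]_n})
    (tau : 'M[C]_n -> C) (m : nat) (a : 'I_m -> 'M[C]_n) :
  star_subalgebra A -> faithful_trace A tau -> orthonormal_basis A tau a ->
  tensor_op_pos A tau (fun j => JaJ (a j)) (fun j => Lmul (a j)).
Proof.
move=> HA Htau Ha N x y Ax Ay.
have Axy k : x k *m y k \in A by rewrite subalgM.
under eq_bigr do under eq_bigr do rewrite (ip_sum_JaJ_Lmul HA Htau _ _ _ _ Ha) //.
by rewrite (ip_sum_sum HA Htau) // (trace_norm_ge0 Htau) // (subalg_sum HA).
Qed.
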